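(* Let $(E,\mathcal{B})$ be a measurable space and $m$ a $\sigma$-additive measure on $\mathcal{B}$. Consider the assertions: (1) $m$ is finite; (2) $m$ is $\sigma$-finite; (3) $m$ is $\sigma$-principal; (4) $m$ is CCC; (5) $m$ is localizable. Then (1) $\Rightarrow$ (2) $\Rightarrow$ (3) $\Rightarrow$ (4) $\Rightarrow$ (5). Moreover, assuming Zorn's lemma, (4) $\Rightarrow$ (3).
   Context: A $\sigma$-ideal of $\mathcal{B}$ is a nonempty $\mathcal{I}\subset\mathcal{B}$ closed under countable unions and such that $B\subset I\in\mathcal{I}$, $B\in\mathcal{B}$ imply $B\in\mathcal{I}$. $m$ is $\sigma$-principal if for every $\sigma$-ideal $\mathcal{I}$ there is $L\in\mathcal{I}$ with $m(S\setminus L)=0$ for all $S\in\mathcal{I}$. $m$ is CCC if every family of pairwise disjoint elements of $\mathcal{B}$ of positive measure is countable. $m$ is localizable if for every $\sigma$-ideal $\mathcal{I}$ of $\mathcal{B}$ there is $L\in\mathcal{B}$ such that (i) $m(S\setminus L)=0$ for all $S\in\mathcal{I}$, and (ii) whenever $B\in\mathcal{B}$ satisfies $m(S\setminus B)=0$ for all $S\in\mathcal{I}$, then $m(L\setminus B)=0$. *)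

From mathcomp Require Import all_boot all_order all_algebra.
From mathcomp Require Import all_classical all_reals all_analysis.
Set Implicit Arguments. Unset Strict Implicit. Unset Printing Implicit Defensive.
Import Order.TTheory GRing.Theory Num.Theory.
Local Open Scope classical_set_scope.
Local Open Scope ring_scope.
Local Open Scope ereal_scope.

Section Defs.
Context {d : measure_display} {T : measurableType d} {R : realType}.

Definition sigma_ideal (I : set (set T)) : Prop :=
  [/\ I !=set0,
      I `<=` measurable,
      (forall F : (set T)^nat, (forall n, I (F n)) -> I (\bigcup_n F n)) &
      (forall B A, measurable B -> B `<=` A -> I A -> I B)].

Definition measure_finite (m : {measure set T -> \bar R}) : Prop :=
  m setT < +oo.

Definition measure_sigma_finite (m : {measure set T -> \bar R}) : Prop :=
  sigma_finite setT m.

Definition sigma_principal (m : {measure set T -> \bar R}) : Prop :=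
  forall I, sigma_ideal I ->
    exists2 L, I L & forall S, I S -> m (S `\` L) = 0.

Definition CCC (m : {measure set T -> \bar R}) : Prop :=
  forall F : set (set T),
    (forall A, F A -> measurable A /\ 0 < m A) ->
    (forall A B, F A -> F B -> A <> B -> A `&` B = set0) ->
    countable F.

Definition localizable (m : {measure set T -> \bar R}) : Prop :=
  forall I, sigma_ideal I ->
    exists2 L, measurable L &
      (forall S, I S -> m (S `\` L) = 0) /\
      (forall B, measurable B -> (forall S, I S -> m (S `\` B) = 0) ->
         m (L `\` B) = 0).

End Defs.

(* The core of the theorem is the exhaustion argument behind (2) => (3): on a
   set G of finite measure, the supremum of m (S `&` G) over S in a sigma-ideal
   is attained by the countable union of an approximating sequence, and every
   member of the ideal is then negligible off that union inside G; sigma-finite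
   pieces glue together.  For (3) => (4), the sets covered by countably many
   members of a disjoint family of positive measure form a sigma-ideal, and its
   principal element can only miss members of measure zero.  For (4) => (3),
   Zorn's lemma gives a maximal disjoint family of positive-measure members of
   the ideal; it is countable by CCC, and anything its union misses is
   negligible by maximality. *)

From mathcomp Require Import all_boot all_order all_algebra.
From mathcomp Require Import all_classical all_reals all_analysis.

Import Order.TTheory GRing.Theory Num.Theory.
Local Open Scope classical_set_scope.
Local Open Scope ring_scope.

Section sigma_ideal.
Context {d : measure_display} {T : measurableType d} {I : set (set T)}.
Hypothesis HI : sigma_ideal I.

Lemma sigma_ideal_measurable {A} : I A -> measurable A.
Proof. by case: HI => _ mI _ _; apply: mI. Qed.

Lemma sigma_idealS {A B} : measurable B -> B `<=` A -> I A -> I B.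
Proof. by case: HI => _ _ _; apply. Qed.

Lemma sigma_ideal0 : I set0.
Proof.
case: (HI) => -[A IA] _ _ _.
exact: sigma_idealS measurable0 (sub0set A) IA.
Qed.

Lemma sigma_ideal_bigcup (F : (set T)^nat) :
  (forall n, I (F n)) -> I (\bigcup_n F n).
Proof. by case: HI => _ _ + _; apply. Qed.

Lemma sigma_idealU {A B} : I A -> I B -> I (A `|` B).
Proof.
move=> IA IB; rewrite -bigcup2E.
by apply: sigma_ideal_bigcup => -[|[|n]] //=; exact: sigma_ideal0.
Qed.

Lemma sigma_ideal_bigcup_countable {F : set (set T)} :
  countable F -> F `<=` I -> I (\bigcup_(A in F) A).
Proof.
move=> /pcard_surjP[g gF] FI.
pose h n := if pselect (F (g n)) is left _ then g n else set0.
suff -> : \bigcup_(A in F) A = \bigcup_n h n.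
  by apply: sigma_ideal_bigcup => n; rewrite /h; case: pselect => [/FI|_];
    [|exact: sigma_ideal0].
apply/seteqP; split => [x [A FA Ax]|x [n _]].
  have [n _ gnA] := gF A FA; exists n => //.
  by rewrite /h; case: pselect => [|]; rewrite gnA.
by rewrite /h; case: pselect => // Fgn gnx; exists (g n).
Qed.

End sigma_ideal.

Section countably_covered.
Context {d : measure_display} {T : measurableType d}.

Definition countably_covered (F : set (set T)) : set (set T) :=
  [set B | measurable B /\
     exists2 G, countable G /\ G `<=` F & B `<=` \bigcup_(A in G) A].

Lemma countably_covered_member F A :
  measurable A -> F A -> countably_covered F A.
Proof.
move=> mA FA; split => //; exists [set A]; last exact: bigcup_sup.
by split; [exact: countable1 | move=> _ ->].
Qed.

Lemma sigma_ideal_countably_covered F : sigma_ideal (countably_covered F).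
Proof.
split.
- exists set0; split => //; exists set0 => //.
  by split; [exact: countable0 | exact: sub0set].
- by move=> B [].
- move=> B BF; have /choice[G HG] : forall n, exists G : set (set T),
      (countable G /\ G `<=` F) /\ B n `<=` \bigcup_(A in G) A.
    by move=> n; case: (BF n) => _ [G ? ?]; exists G.
  split; first by apply: bigcupT_measurable => n; case: (BF n).
  exists (\bigcup_n G n).
    split; first by apply: bigcup_countable => // n _; exact: (HG n).1.1.
    by move=> A [n _ GnA]; exact: (HG n).1.2 _ GnA.
  move=> x [n _ /(HG n).2[A GnA Ax]]; exists A => //; by exists n.
- move=> B A mB BA [_ [G HG AG]]; split => //.
  by exists G => //; exact: subset_trans BA AG.
Qed.

End countably_covered.

Section measure_properties.
Context {d : measure_display} {T : measurableType d} {R : realType}.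
Variable m : {measure set T -> \bar R}.
Local Open Scope ereal_scope.

Lemma measure_finite_sigma_finite : measure_finite m -> measure_sigma_finite m.
Proof.
move=> mfin; exists (fun=> setT) => //.
by apply/seteqP; split=> x // _; exists 0%N.
Qed.

Lemma sigma_principal_localizable : sigma_principal m -> localizable m.
Proof.
move=> mP I HI; have [L IL mL] := mP I HI.
exists L; first exact: sigma_ideal_measurable IL.
by split=> // B _; apply.
Qed.

Section finite_piece.
Context {I : set (set T)} {G : set T}.
Hypotheses (HI : sigma_ideal I) (mG : measurable G) (Gfin : m G < +oo).

Lemma sigma_ideal_trace_max :
  exists2 L, I L & forall S, I S -> m (S `&` G) <= m (L `&` G).
Proof.
pose s := ereal_sup [set m (S `&` G) | S in I].
have sG : s <= m G.
  apply: ge_ereal_sup => _ [S IS <-].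
  exact: measureIr (sigma_ideal_measurable HI IS) mG.
have sfin : s \is a fin_num.
  rewrite ge0_fin_numE ?(le_lt_trans sG) //.
  apply: ereal_sup_ubound; exists set0; first exact: sigma_ideal0.
  by rewrite set0I measure0.
have /choice[S HS] : forall k : nat,
    exists S, I S /\ s - k.+1%:R^-1%:E < m (S `&` G).
  move=> k; have k0 : (0 < k.+1%:R^-1 :> R)%R by rewrite invr_gt0.
  by have [_ [S IS <-] ?] := ub_ereal_sup_adherent k0 sfin; exists S.
have IL : I (\bigcup_k S k) by apply: sigma_ideal_bigcup => // k; case: (HS k).
exists (\bigcup_k S k) => // S' IS'.
have -> : m (\bigcup_k S k `&` G) = s.
  apply/eqP; rewrite eq_le; apply/andP; split.
    by apply: ereal_sup_ubound; exists (\bigcup_k S k).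
  apply/lee_subgt0Pr => e e0; have [k ke] := ltr_add_invr e0.
  rewrite add0r in ke; case: (HS k) => ISk /ltW Sk_approx.
  apply: le_trans (leeB (lexx s) (ltW _ : (k.+1%:R^-1)%:E <= e%:E)) _.
    by rewrite lte_fin.
  apply: le_trans Sk_approx _; apply: le_measure; rewrite ?inE.
  - exact: measurableI (sigma_ideal_measurable HI ISk) mG.
  - exact: measurableI (sigma_ideal_measurable HI IL) mG.
  by apply: setSI; exact: bigcup_sup.
by apply: ereal_sup_ubound; exists S'.
Qed.

Lemma sigma_ideal_principal_on_finite :
  exists2 L, I L & forall S, I S -> m ((S `\` L) `&` G) = 0.
Proof.
have [L IL Lmax] := sigma_ideal_trace_max; exists L => // S IS.
have [mS mL] := (sigma_ideal_measurable HI IS, sigma_ideal_measurable HI IL).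
have LGfin : m (L `&` G) \is a fin_num.
  by rewrite ge0_fin_numE // (le_lt_trans _ Gfin) // (measureIr m mL mG).
apply/eqP; rewrite eq_le measure_ge0 andbT -(leeD2rE _ _ LGfin) add0e.
rewrite -measureU; first last.
- by rewrite setIACA setDKI set0I.
- exact: measurableI.
- by apply: measurableI => //; exact: measurableD.
by rewrite -setIUl setUDl setDv setD0; exact: Lmax (sigma_idealU HI IS IL).
Qed.

End finite_piece.

Lemma sigma_finite_sigma_principal :
  measure_sigma_finite m -> sigma_principal m.
Proof.
case=> F FT Ffin I HI.
have /choice[L HL] : forall n, exists L,
    I L /\ forall S, I S -> m ((S `\` L) `&` F n) = 0.
  move=> n; have [mFn /= Fnfin] := Ffin n.
  by have [L ? ?] := sigma_ideal_principal_on_finite HI mFn Fnfin; exists L.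
have mL n : measurable (L n) by case: (HL n) => /(sigma_ideal_measurable HI).
exists (\bigcup_n L n).
  by apply: sigma_ideal_bigcup => // n; case: (HL n).
move=> S IS; have mS := sigma_ideal_measurable HI IS.
apply/negligibleP; first by apply: measurableD => //; exact: bigcupT_measurable.
apply: (@negligibleS _ _ _ _ (\bigcup_n ((S `\` L n) `&` F n))).
  move=> x [Sx notLx]; have : [set: T] x by [].
  rewrite FT => -[n _ Fnx]; exists n => //; split => //; split => // Lnx.
  by apply: notLx; exists n.
apply: negligible_bigcup => n; apply/negligibleP; last exact: (HL n).2.
by apply: measurableI; [exact: measurableD | exact: (Ffin n).1].
Qed.

Lemma sigma_principal_CCC : sigma_principal m -> CCC m.
Proof.
move=> mP F Fpos Fdisj.
have [L [_ [G [cG GF] LG]] HL] := mP _ (sigma_ideal_countably_covered F).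
apply: sub_countable cG; apply: subset_card_le => A FA.
apply: contrapT => GnA; have [mA Apos] := Fpos A FA.
have AL0 : A `&` L = set0.
  apply/seteqP; split => // x [Ax /LG[B GB Bx]].
  have AB : A <> B by move=> AB; apply: GnA; rewrite AB.
  by rewrite -(Fdisj A B FA (GF _ GB) AB).
move: Apos; rewrite -(setDidl AL0) HL ?ltxx //.
exact: countably_covered_member.
Qed.

Definition positive_disjoint_in (I F : set (set T)) : Prop :=
  (forall A, F A -> I A /\ 0 < m A) /\
  (forall A B, F A -> F B -> A <> B -> A `&` B = set0).

Lemma maximal_positive_disjoint_in I : exists F, positive_disjoint_in I F /\
  forall F', F `<` F' -> ~ positive_disjoint_in I F'.
Proof.
apply: Zorn_bigcup => C Cpd Ctot; split.
  by move=> A [F CF FA]; exact: (Cpd F CF).1 A FA.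
move=> A B [F CF FA] [F' CF' F'B] AB.
have [FF'|F'F] := Ctot F F' CF CF'.
- exact: (Cpd F' CF').2 A B (FF' _ FA) F'B AB.
- exact: (Cpd F CF).2 A B FA (F'F _ F'B) AB.
Qed.

Lemma positive_disjoint_inU1 {I F C} :
  positive_disjoint_in I F -> I C -> 0 < m C ->
  C `&` \bigcup_(A in F) A = set0 -> positive_disjoint_in I (F `|` [set C]).
Proof.
move=> [FI Fdisj] IC Cpos CF0; split; first by move=> A [/FI|->].
have CA A : F A -> C `&` A = set0.
  move=> FA; apply/seteqP; split => // x; rewrite -CF0.
  by apply: setIS; exact: bigcup_sup.
move=> A B [FA|->] [FB|->] AB //.
- exact: Fdisj.
- by rewrite setIC CA.
- exact: CA.
Qed.

Lemma CCC_sigma_principal : CCC m -> sigma_principal m.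
Proof.
move=> mCCC I HI; have [F [Fpd Fmax]] := maximal_positive_disjoint_in I.
have [FI Fdisj] := Fpd.
have cF : countable F.
  by apply: mCCC => // A /FI[/(sigma_ideal_measurable HI) mA Apos].
have IL := sigma_ideal_bigcup_countable HI cF (fun A FA => (FI A FA).1).
exists (\bigcup_(A in F) A) => // S IS; apply: contrapT => SL0.
set C := S `\` \bigcup_(A in F) A.
have mC : measurable C.
  by apply: measurableD; [move: IS | move: IL] => /(sigma_ideal_measurable HI).
have Cpos : 0 < m C by rewrite lt_def measure_ge0 andbT; apply/eqP.
have IC : I C := sigma_idealS HI mC (@subDsetl _ _ _) IS.
have CL0 : C `&` \bigcup_(A in F) A = set0 by rewrite setDKI.
have FC : F `<` F `|` [set C].
  split; first exact: subsetUl.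
  move=> /(_ C (or_intror erefl)) FC.
  have CL : C `<=` \bigcup_(A in F) A by move=> x Cx; exists C.
  by move: Cpos; rewrite -(setIidl CL) CL0 measure0 ltxx.
exact: Fmax FC (positive_disjoint_inU1 Fpd IC Cpos CL0).
Qed.

End measure_properties.

Theorem theoremA1 (d : measure_display) (T : measurableType d) (R : realType)
    (m : {measure set T -> \bar R}) :
  [/\ (measure_finite m -> measure_sigma_finite m),
      (measure_sigma_finite m -> sigma_principal m),
      (sigma_principal m -> CCC m),
      (CCC m -> localizable m) &
      (CCC m -> sigma_principal m)].
Proof.
split.
- exact: measure_finite_sigma_finite.
- exact: sigma_finite_sigma_principal.
- exact: sigma_principal_CCC.
- by move=> /CCC_sigma_principal; exact: sigma_principal_localizable.
- exact: CCC_sigma_principal.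
Qed.
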